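(* Let $(H,+,\circ)$ be a commutative multiplicative hyperring with identity and let $P$ be a proper strong $\mathcal{C}$-hyperideal of $H$. Then $P$ is an sdf-absorbing hyperideal of $H$ if and only if the following holds: whenever $0\neq x,y\in H\setminus P$ satisfy $x\circ y\subseteq P$, there are no $0\neq a,b\in H$ with $a-b=x$ and $a+b=y$.
   Context: A commutative multiplicative hyperring $(H,+,\circ)$ consists of an abelian group $(H,+)$ and an associative, commutative hyperoperation $\circ: H\times H\to P^*(H)$ with $x\circ(y+z)\subseteq x\circ y+x\circ z$ and $x\circ(-y)=-(x\circ y)=(-x)\circ y$. For subsets $A,B$, $A\circ B=\bigcup_{a\in A,b\in B}a\circ b$, $A\pm B=\{a\pm b\}$; $x^2=x\circ x$. Identity: $x\in x\circ 1$ for all $x$. A hyperideal is a nonempty $P$ with $x-y\in P$ and $r\circ x\subseteq P$ for $x,y\in P$, $r\in H$. Let $\mathcal{C}=\{c_1\circ\cdots\circ c_n: c_i\in H,n\in\mathbb{N}\}$ and $\mathfrak{C}=\{\sum_{i=1}^n C_i: C_i\in\mathcal{C}\}$; $P$ is a strong $\mathcal{C}$-hyperideal if for every $D\in\mathfrak{C}$, $D\cap P\neq\varnothing$ implies $D\subseteq P$. A proper hyperideal $P$ is sdf-absorbing if whenever $0\neq x,y\in H$ and $x^2-y^2\subseteq P$, then $x-y\in P$ or $x+y\in P$. *)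

From mathcomp Require Import all_boot all_algebra.
Set Implicit Arguments. Unset Strict Implicit. Unset Printing Implicit Defensive.
Import GRing.Theory.
Local Open Scope ring_scope.

Definition hset (H : Type) := H -> Prop.

Section Hyper.
Variable H : zmodType.

Definition hsub (A B : hset H) : Prop := forall z, A z -> B z.
Definition hsingle (x : H) : hset H := fun z => z = x.
Definition hadd (A B : hset H) : hset H :=
  fun z => exists a b, A a /\ B b /\ z = a + b.
Definition hminus (A B : hset H) : hset H :=
  fun z => exists a b, A a /\ B b /\ z = a - b.
Definition hlift (m : H -> H -> hset H) (A B : hset H) : hset H :=
  fun z => exists a b, A a /\ B b /\ m a b z.
End Hyper.

Record comMulHyperring (H : zmodType) := ComMulHyperring {
  hmul : H -> H -> hset H;
  hone : H;
  hmul_nonempty : forall x y, exists z, hmul x y z;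
  hmul_assoc : forall x y z w,
    hlift hmul (hmul x y) (hsingle z) w <-> hlift hmul (hsingle x) (hmul y z) w;
  hmul_comm : forall x y z, hmul x y z <-> hmul y x z;
  hmul_distr : forall x y z,
    hsub (hmul x (y + z)) (hadd (hmul x y) (hmul x z));
  hmul_oppr : forall x y w, hmul x (- y) w <-> hmul x y (- w);
  hmul_oppl : forall x y w, hmul (- x) y w <-> hmul x y (- w);
  hmul_one : forall x, hmul x hone x
}.

Section Ideals.
Variables (H : zmodType) (R : comMulHyperring H).
Local Notation "x 'o' y" := (hmul R x y) (at level 40).

Definition hyperideal (P : hset H) : Prop :=
  (exists x, P x) /\
  (forall x y, P x -> P y -> P (x - y)) /\
  (forall r x, P x -> hsub (r o x) P).

Definition proper_hyperideal (P : hset H) : Prop := exists x, ~ P x.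

(* c o c_1 o ... o c_n (left-associated; n >= 0 extra factors) : an element of C *)
Fixpoint hprod_aux (A : hset H) (s : seq H) : hset H :=
  match s with
  | [::] => A
  | c :: s' => hprod_aux (hlift (hmul R) A (hsingle c)) s'
  end.
Definition hprod (c : H) (s : seq H) : hset H := hprod_aux (hsingle c) s.

(* C_1 + ... + C_n with n >= 1, each C_i in C : an element of frak C *)
Definition Csum (t0 : H * seq H) (t : seq (H * seq H)) : hset H :=
  foldl (fun A p => hadd A (hprod p.1 p.2)) (hprod t0.1 t0.2) t.

Definition strong_C_hyperideal (P : hset H) : Prop :=
  hyperideal P /\
  forall t0 t, (exists z, Csum t0 t z /\ P z) -> hsub (Csum t0 t) P.

Definition hsq (x : H) : hset H := x o x.

Definition sdf_absorbing (P : hset H) : Prop :=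
  hyperideal P /\ proper_hyperideal P /\
  forall x y, x != 0 -> y != 0 ->
    hsub (hminus (hsq x) (hsq y)) P -> P (x - y) \/ P (x + y).
End Ideals.

(* The sum D(a, b) = a o a + (-b) o a + b o a + (-b) o b of the family frak C
   contains (a - b) o (a + b), by distributivity, and also a^2 - b^2, by choosing
   the same element of b o a in its two middle summands.  A strong C-hyperideal
   that meets D(a, b) contains all of it, so (a - b) o (a + b) is contained in P
   if and only if a^2 - b^2 is.  With x = a - b and y = a + b, the stated
   condition is then the contrapositive of sdf-absorption. *)
From Stdlib Require Import Classical.
From mathcomp Require Import all_boot all_algebra.
Set Implicit Arguments. Unset Strict Implicit.
Import GRing.Theory.
Local Open Scope ring_scope.

Section SquareDifference.
Variables (H : zmodType) (R : comMulHyperring H).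

Lemma hyperideal0 (P : hset H) : hyperideal R P -> P 0.
Proof. by case=> [[w Pw] [PB _]]; rewrite -(subrr w); apply: PB. Qed.

Lemma hyperideal_neq0 (P : hset H) x : hyperideal R P -> ~ P x -> x != 0.
Proof. by move=> /hyperideal0 P0 Px; apply/eqP => x0; apply: Px; rewrite x0. Qed.

Definition sqdiff_Csum (a b : H) : hset H :=
  Csum R (a, [:: a]) [:: (- b, [:: a]); (b, [:: a]); (- b, [:: b])].

Lemma sqdiff_CsumP a b p q1 q2 r :
  hmul R a a p -> hmul R b a q1 -> hmul R b a q2 -> hmul R b b r ->
  sqdiff_Csum a b (p - q1 + q2 - r).
Proof.
have lift x y w : hmul R x y w -> hlift (hmul R) (hsingle x) (hsingle y) w.
  by move=> xyw; exists x, y.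
have liftN x y w : hmul R x y w -> hlift (hmul R) (hsingle (- x)) (hsingle y) (- w).
  by move=> xyw; apply: lift; apply/hmul_oppl; rewrite !opprK.
move=> aap baq1 baq2 bbr.
exists (p - q1 + q2), (- r); split; [|split; [exact: liftN|by []]].
exists (p - q1), q2; split; [|split; [exact: lift|by []]].
by exists p, (- q1); split; [exact: lift|split; [exact: liftN|]].
Qed.

Lemma hmul_subD_sub_sqdiff_Csum a b :
  hsub (hmul R (a - b) (a + b)) (sqdiff_Csum a b).
Proof.
move=> z /hmul_distr [u [v [/hmul_comm/hmul_distr [p [w [aap [bw ->]]]]
                          [/hmul_comm/hmul_distr [q [w' [baq [bw' ->]]]] ->]]]].
move: bw => /hmul_oppr/hmul_comm bap; move: bw' => /hmul_oppr bbr.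
by have := sqdiff_CsumP aap bap baq bbr; rewrite !opprK addrA.
Qed.

Lemma hminus_hsq_sub_sqdiff_Csum a b :
  hsub (hminus (hsq R a) (hsq R b)) (sqdiff_Csum a b).
Proof.
move=> _ [p [r [aap [bbr ->]]]]; have [q baq] := hmul_nonempty R b a.
by have := sqdiff_CsumP aap baq baq bbr; rewrite addrNK.
Qed.

Lemma strong_C_hmul_subD_hsq (P : hset H) a b : strong_C_hyperideal R P ->
  hsub (hmul R (a - b) (a + b)) P <-> hsub (hminus (hsq R a) (hsq R b)) P.
Proof.
move=> [_ PC]; split=> sub_P.
- have [z abz] := hmul_nonempty R (a - b) (a + b).
  have DP : hsub (sqdiff_Csum a b) P.
    by apply: PC; exists z; split; [exact: hmul_subD_sub_sqdiff_Csum abz|exact: sub_P abz].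
  by move=> w /hminus_hsq_sub_sqdiff_Csum; apply: DP.
- have [p aap] := hmul_nonempty R a a; have [r bbr] := hmul_nonempty R b b.
  have pr : hminus (hsq R a) (hsq R b) (p - r) by exists p, r.
  have DP : hsub (sqdiff_Csum a b) P.
    by apply: PC; exists (p - r); split; [exact: hminus_hsq_sub_sqdiff_Csum pr|exact: sub_P pr].
  by move=> w /hmul_subD_sub_sqdiff_Csum; apply: DP.
Qed.

End SquareDifference.

Theorem mainTheorem4 (H : zmodType) (R : comMulHyperring H) (P : H -> Prop) :
  proper_hyperideal P -> strong_C_hyperideal R P ->
  (sdf_absorbing R P <->
   (forall x y : H, x != 0 -> y != 0 -> ~ P x -> ~ P y ->
      hsub (hmul R x y) P ->
      ~ (exists a b : H, a != 0 /\ b != 0 /\ a - b = x /\ a + b = y))).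
Proof.
move=> Pproper PC; have [Pideal _] := PC; split.
- move=> [_ [_ Psdf]] x y _ _ Px Py xyP [a [b [a0 [b0 [ax ay]]]]]; subst x y.
  have sqP : hsub (hminus (hsq R a) (hsq R b)) P.
    exact/(strong_C_hmul_subD_hsq _ _ PC).
  by case: (Psdf a b a0 b0 sqP).
- move=> Pcond; split; [exact: Pideal|split; [exact: Pproper|]].
  move=> x y x0 y0 sqP.
  have [Pxy | nPxy] := classic (P (x - y)); first by left.
  have [Pyx | nPyx] := classic (P (x + y)); first by right.
  exfalso; apply: (Pcond (x - y) (x + y)) => //.
  + exact: hyperideal_neq0 Pideal nPxy.
  + exact: hyperideal_neq0 Pideal nPyx.
  + exact/(strong_C_hmul_subD_hsq _ _ PC).
  + by exists x, y.
Qed.
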